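(* Let $\lambda$ be a positive, increasing, smooth function on $[0,\infty)$ such that $\liminf_{x\to\infty}S(x,\lambda)>0$. Let $g$ be a positive differentiable function on $(0,\infty)$ such that $X\mapsto\log g(e^X)$ is convex and \[ \int_0^\infty g(x)\,\lambda(x)^{-1}\,dx<\infty . \] Then $\lim_{x\to\infty}g(x)\lambda(x)^{-1}=0$.
   Context: For a positive increasing smooth function $\lambda$ and $x_0>0$ in its domain, \[ S(x_0,\lambda)=\int_{x_0}^\infty\frac{\lambda(x_0)}{\lambda(x)}\left(\frac{x}{x_0}\right)^{x_0\lambda'(x_0)/\lambda(x_0)}dx . \] *)

From HB Require Import structures.
From mathcomp Require Import all_boot all_order all_algebra.
From mathcomp Require Import all_classical all_reals all_analysis.
Set Implicit Arguments. Unset Strict Implicit. Unset Printing Implicit Defensive.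
Import Order.TTheory GRing.Theory Num.Theory.
Import numFieldNormedType.Exports.
Local Open Scope classical_set_scope.
Local Open Scope ring_scope.

Definition S_fun (R : realType) (x0 : R) (lam : R -> R) : \bar R :=
  (\int[@lebesgue_measure R]_(x in `[x0, +oo[)
     ((lam x0 / lam x) * (x / x0) `^ (x0 * derive1 lam x0 / lam x0))%:E)%E.

Definition iter_deriv (R : realType) (n : nat) (f : R -> R) : R -> R :=
  iter n (fun h => derive1 h) f.

(* Suppose g / lambda does not tend to 0.  Since it is integrable, it drops
   below any e > 0 arbitrarily far out, so an excursion above e has an interior
   maximum m where g'/g = lambda'/lambda.  Convexity of log g in log x then gives
   g x >= g m (x / m)^(m lambda'(m) / lambda(m)) for x >= m, hence the tail
   integral of g / lambda from m is at least (g / lambda)(m) S(m, lambda) >= e c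
   with c > 0 a lower bound of S, contradicting that the tail integrals vanish. *)

From HB Require Import structures.
From mathcomp Require Import all_boot all_order all_algebra.
From mathcomp Require Import all_classical all_reals all_analysis.
From mathcomp Require Import ring lra measurable_realfun.
Set Implicit Arguments.
Unset Strict Implicit.
Unset Printing Implicit Defensive.

Import Order.TTheory GRing.Theory Num.Theory.
Import numFieldNormedType.Exports.
Local Open Scope classical_set_scope.
Local Open Scope ring_scope.

Lemma convex_tangent_le (R : realType) (h : R -> R) (c s y : R) :
  convex_function (setT : set R) h -> is_derive c 1 h s ->
  h c + s * (y - c) <= h y.
Proof.
move=> hcvx [dh hs]; set v := y - c.
have dif : differentiable h c by apply/derivable1_diffP.
have dv : derivable h c v by exact: diff_derivable.
have Dv : 'D_v h c = s * v.
  by rewrite (deriveE _ dif) (deriv1E dh) derive1E hs mulrC.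
(* 'D_v h c is the right limit of difference quotients, each at most h y - h c *)
rewrite -lerBrDl -Dv ['D_v h c](cvg_at_rightE _ _ dv).
apply: limr_le.
  rewrite -(cvg_at_rightE _ _ dv); apply: cvg_trans dv; apply: cvg_app.
  move=> A [e e0 Ae]; exists e => // t te t0; apply: Ae => //; exact: lt0r_neq0.
near=> t.
have t0 : 0 < t by near: t; exists 1 => //= u _.
have t1 : t < 1.
  near: t; exists 1 => //= u + _.
  by rewrite /ball_ /= sub0r normrN; apply/le_lt_trans/ler_norm.
have : h (t * y + (1 - t) * c) <= t * h y + (1 - t) * h c.
  exact: (hcvx (Itv01 (ltW t0) (ltW t1)) y c (in_setT _) (in_setT _)).
have -> : t * y + (1 - t) * c = t * v + c by rewrite /v; ring.
rewrite /= ler_pdivrMl //; lra.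
Unshelve. all: by end_near.
Qed.

Lemma logconvex_powR_le (R : realType) (g : R -> R) (x0 x : R) :
  0 < x0 -> 0 < x -> 0 < g x0 -> 0 < g x -> derivable g x0 1 ->
  convex_function (setT : set R) (fun X => ln (g (expR X))) ->
  g x0 * (x / x0) `^ (x0 * derive1 g x0 / g x0) <= g x.
Proof.
move=> x00 x0' gx0 gx dg hcvx.
have ex0 : expR (ln x0) = x0 by rewrite lnK // posrE.
have dH : is_derive (ln x0) 1 (fun X => ln (g (expR X))) (x0 * derive1 g x0 / g x0).
  have dg' : is_derive (expR (ln x0)) 1 g (derive1 g x0).
    by rewrite ex0 derive1E; exact: derivableP.
  have dl : is_derive ((g \o expR) (ln x0)) 1 (@ln R) (g x0)^-1.
    by rewrite /= ex0; exact: is_derive1_ln.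
  apply: is_derive_eq (is_derive1_comp dl (is_derive1_comp dg' (is_derive_expR _))) _.
  by rewrite ex0; field; exact: lt0r_neq0.
have := @convex_tangent_le R _ _ _ (ln x) hcvx dH; rewrite !lnK ?posrE // => hle.
rewrite -(lnK gx) -[X in X * _](lnK gx0) /powR gt_eqF ?divr_gt0 //.
by rewrite -expRD ler_expR lnM ?posrE ?invr_gt0 // lnV ?posrE.
Qed.

Lemma derive_div_eq0_logderive (R : realType) (g lam : R -> R) (m : R) :
  g m != 0 -> lam m != 0 -> derivable g m 1 -> derivable lam m 1 ->
  is_derive m 1 (fun x => g x / lam x) 0 ->
  derive1 g m / g m = derive1 lam m / lam m.
Proof.
move=> gm lm dg dl [_ D0].
have : 0 = g m * (- lam m ^- 2 * 'D_1 lam m) + (lam m)^-1 * 'D_1 g m.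
  by rewrite -D0; case: (is_deriveM (derivableP dg) (is_deriveV lm (derivableP dl))).
have -> : g m * (- lam m ^- 2 * 'D_1 lam m) + (lam m)^-1 * 'D_1 g m =
    g m / lam m * ('D_1 g m / g m - 'D_1 lam m / lam m).
  by field; apply/andP.
move/esym/eqP; rewrite mulf_eq0 mulf_eq0 invr_eq0 (negPf gm) (negPf lm) /=.
by rewrite subr_eq0 !derive1E => /eqP.
Qed.

Definition S_kernel (R : realType) (lam : R -> R) (x0 x : R) : R :=
  lam x0 / lam x * (x / x0) `^ (x0 * derive1 lam x0 / lam x0).

Lemma S_funE (R : realType) (lam : R -> R) (x0 : R) :
  S_fun x0 lam = (\int[@lebesgue_measure R]_(x in `[x0, +oo[)
                    (S_kernel lam x0 x)%:E)%E.
Proof. by []. Qed.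

Lemma derivable_S_kernel (R : realType) (lam : R -> R) (x0 x : R) :
  0 < x0 -> 0 < x -> lam x != 0 -> derivable lam x 1 ->
  derivable (S_kernel lam x0) x 1.
Proof.
move=> x00 x0' lx dl; apply: derivableM.
  by apply: derivableM; [exact: derivable_cst|exact: derivableV].
set a := x0 * derive1 lam x0 / lam x0.
have dpow := is_derive1_powR a (divr_gt0 x0' x00).
have ddiv := is_deriveM (is_derive_id x 1) (is_derive_cst x0^-1 x 1).
by case: (@is_derive1_comp R (fun y => y `^ a) (fun y => y / x0) x _ _ dpow ddiv).
Qed.

Lemma derivable_measurable_itvoy (R : realType) (f : R -> R) :
  (forall x, 0 < x -> derivable f x 1) ->
  measurable_fun (`]0, +oo[ : set R) (EFin \o f).
Proof.
move=> df; apply/measurable_EFinP.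
apply: open_continuous_measurable_fun; first exact: interval_open.
move=> x; rewrite inE /= in_itv /= andbT => x0.
exact/differentiable_continuous/derivable1_diffP/df.
Qed.

Section IntegrableOnHalfLine.
Variables (R : realType) (f : R -> R).
Hypothesis f_ge0 : forall x, 0 < x -> 0 <= f x.
Hypothesis mf : measurable_fun (`]0, +oo[ : set R) (EFin \o f).
Let mu := @lebesgue_measure R.

Let f_ge0E {A : set R} : A `<=` `]0, +oo[ -> forall x, A x -> (0 <= (f x)%:E)%E.
Proof. by move=> sA x /sA; rewrite /= in_itv /= andbT lee_fin => /f_ge0. Qed.

Lemma ge0_integral_itvoy_sup :
  (\int[mu]_(x in `]0%R, +oo[) (f x)%:E)%E =
    ereal_sup (range (fun n : nat => \int[mu]_(x in `]0%R, n%:R]) (f x)%:E)%E).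
Proof.
pose F (n : nat) : set R := `]0, n%:R]%classic.
have mF n : measurable (F n) by exact: measurable_itv.
have FS n : F n `<=` `]0, +oo[.
  by move=> y; rewrite /F /= !in_itv /= andbT => /andP[].
have mfF n : measurable_fun (F n) (EFin \o f) by exact: measurable_funS mf.
have f0F n := f_ge0E (FS n).
have nd : nondecreasing_seq F.
  apply/nondecreasing_seqP => n; rewrite subsetEset => y.
  rewrite /F /= !in_itv /= => /andP[-> yn] /=.
  by rewrite (le_trans yn) // ler_nat.
have UF : \bigcup_n F n = `]0, +oo[%classic.
  apply/seteqP; split => [y [n _ /FS //]|y].
  rewrite /= in_itv /= andbT => y0; exists (Num.bound y) => //.
  by rewrite /F /= in_itv /= y0 /= ltW // archi_boundP // ltW.
have cv := ge0_nondecreasing_set_cvg_integral nd mF mfF f0F (mu := mu).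
rewrite UF in cv; rewrite -(cvg_lim _ cv) //.
apply: cvg_lim => //; apply: ereal_nondecreasing_cvgn.
exact: ge0_nondecreasing_set_nondecreasing_integral.
Qed.

Lemma ge0_integral_itvoc_itvcy_le (a x : R) : 0 < x -> a < x ->
  (\int[mu]_(y in `]0%R, a]) (f y)%:E + \int[mu]_(y in `[x, +oo[) (f y)%:E <=
     \int[mu]_(y in `]0%R, +oo[) (f y)%:E)%E.
Proof.
move=> x0 ax.
have sU : `]0, a] `|` `[x, +oo[ `<=` (`]0, +oo[ : set R).
  move=> y [|]; rewrite /= !in_itv /= ?andbT; first by case/andP.
  exact: lt_le_trans.
have dj : [disjoint `]0, a]%classic & `[x, +oo[%classic].
  apply/disj_set2P; apply/seteqP; split => // y [].
  rewrite /= !in_itv /= andbT => /andP[_ ya] xy.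
  by move: (le_lt_trans (le_trans xy ya) ax); rewrite ltxx.
rewrite -ge0_integral_setU //; first last.
- by apply: f_ge0E.
- exact: measurable_funS mf.
by apply: ge0_subset_integral => //; [exact: measurableU|exact: f_ge0E].
Qed.

Hypothesis f_fin : (\int[mu]_(x in `]0%R, +oo[) (f x)%:E < +oo)%E.

Lemma finite_integral_tail_lt (k : R) : 0 < k ->
  \forall x \near +oo, (\int[mu]_(y in `[x, +oo[) (f y)%:E < k%:E)%E.
Proof.
move=> k0.
have I0 : (0 <= \int[mu]_(x in `]0%R, +oo[) (f x)%:E)%E.
  by apply: integral_ge0; exact: f_ge0E.
have [r Ir] : exists r, (\int[mu]_(x in `]0%R, +oo[) (f x)%:E)%E = r%:E.
  by move: I0 f_fin; case: (\int[mu]_(x in _) _)%E => [r _ _| |//]; [exists r|].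
have : ((r - k)%:E < r%:E)%E by rewrite lte_fin ltrBlDr ltrDl.
rewrite -[X in (_ < X)%E]Ir ge0_integral_itvoy_sup.
move=> /ereal_sup_gt [_ [n _ <-]] hn.
near=> x.
have x0 : 0 < x by near: x; exact: nbhs_pinfty_gt.
have nx : n%:R < x by near: x; exact: nbhs_pinfty_gt.
have := @ge0_integral_itvoc_itvcy_le _ _ x0 nx.
rewrite Ir; move: hn.
case: (\int[mu]_(y in _) _)%E => [a| |]; case: (\int[mu]_(y in _) _)%E => [b| |] //=.
- by rewrite -EFinD !lte_fin lee_fin => ? ?; lra.
- by rewrite ltNyr.
- by rewrite ltNyr.
Unshelve. all: by end_near.
Qed.

Lemma finite_integral_frequently_lt (d M : R) : 0 < d ->
  exists2 p, M < p & f p < d.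
Proof.
move=> d0; apply: contrapT => nex.
set P := Num.max M 0 + 1.
have MP : M < P by rewrite /P ltr_pwDr // le_max lexx.
have P0 : 0 < P by rewrite /P ltr_pwDr // le_max lexx orbT.
have sP : `[P, +oo[ `<=` (`]0, +oo[ : set R).
  by move=> y; rewrite /= !in_itv /= !andbT; exact: lt_le_trans.
have : (\int[mu]_(y in `[P, +oo[) (cst d%:E) y <=
        \int[mu]_(y in `]0%R, +oo[) (f y)%:E)%E.
  apply: le_trans (ge0_subset_integral mu (measurable_itv _) (measurable_itv _)
                     mf (f_ge0E (@subset_refl _ _)) sP).
  apply: ge0_le_integral => //.
  - by move=> y _; rewrite lee_fin ltW.
  - exact: measurable_funS mf.
  move=> y; rewrite /= in_itv /= andbT => Py; rewrite lee_fin leNgt.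
  by apply/negP => fy; apply: nex; exists y => //; exact: lt_le_trans Py.
rewrite integral_cst // -[X in (d%:E * X)%E]/(lebesgue_measure `[P, +oo[%classic).
rewrite lebesgue_measure_itv /= ltry /= addye // gt0_muley ?lte_fin //.
by move=> /(le_lt_trans)/(_ f_fin); rewrite ltxx.
Qed.

End IntegrableOnHalfLine.

Lemma limf_einf_gt0_lb (R : realType) (S : R -> \bar R) :
  (0 < limf_einf S +oo%R)%E ->
  exists2 c, 0 < c & \forall x \near +oo, (c%:E <= S x)%E.
Proof.
rewrite limf_einfE => /ereal_sup_gt [_ [V [M [_ MV]] <-] infV0].
have infV_le x : M < x -> (ereal_inf (S @` V) <= S x)%E.
  by move=> Mx; apply: ge_ereal_inf; exists (S x) => //; exists x => //; exact: MV.
move: infV0 infV_le; case: (ereal_inf (S @` V)) => [r| |] // r0 infV_le.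
- by exists r; [rewrite -lte_fin|exists M; split; [exact: num_real|]].
- exists 1 => //; exists M; split; first exact: num_real.
  by move=> x /infV_le; rewrite leye_eq => /eqP ->; rewrite leey.
Qed.

Lemma interior_max_derive_eq0 (R : realType) (f : R -> R) (p q x e : R) :
  p < x -> x < q -> f p < e -> f q < e -> e <= f x ->
  {in `[p, q], forall t, derivable f t 1} ->
  exists m, [/\ p < m, e <= f m & is_derive m 1 f 0].
Proof.
move=> px xq fpe fqe efx df.
have pq : p <= q by rewrite ltW ?(lt_trans px).
have [m mpq mmax] := EVT_max pq (derivable_within_continuous df).
have efm : e <= f m by rewrite (le_trans efx) // mmax // in_itv /= !ltW.
have pm : p < m.
  rewrite lt_neqAle (itvP mpq) andbT; apply/eqP => pm.
  by move: fpe; rewrite pm ltNge efm.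
have mq : m < q.
  rewrite lt_neqAle (itvP mpq) andbT; apply/eqP => mq.
  by move: fqe; rewrite -mq ltNge efm.
exists m; split => //; apply: derive1_at_max pq _ _ _.
- by move=> t /subset_itv_oo_cc; exact: df.
- by rewrite in_itv /= pm mq.
- by move=> t /subset_itv_oo_cc; exact: mmax.
Qed.

Section LogConvexQuotient.
Variables (R : realType) (lam g : R -> R).
Hypothesis lam_gt0 : forall x, 0 < x -> 0 < lam x.
Hypothesis dlam : forall x, 0 < x -> derivable lam x 1.
Hypothesis g_gt0 : forall x, 0 < x -> 0 < g x.
Hypothesis dg : forall x, 0 < x -> derivable g x 1.
Hypothesis g_logcvx : convex_function (setT : set R) (fun X => ln (g (expR X))).
Let mu := @lebesgue_measure R.

Let div_ge0 x : 0 < x -> 0 <= g x / lam x.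
Proof. by move=> x0; rewrite divr_ge0 // ltW ?g_gt0 ?lam_gt0. Qed.

Let derivable_div x : 0 < x -> derivable (fun x => g x / lam x) x 1.
Proof.
move=> x0; apply: derivableM; first exact: dg.
by apply: derivableV; [rewrite gt_eqF ?lam_gt0|exact: dlam].
Qed.

Let measurable_div : measurable_fun (`]0, +oo[ : set R) (EFin \o (fun x => g x / lam x)).
Proof. exact: derivable_measurable_itvoy. Qed.

Lemma div_mul_S_kernel_le (m x : R) : 0 < m -> 0 < x ->
  derive1 g m / g m = derive1 lam m / lam m ->
  g m / lam m * S_kernel lam m x <= g x / lam x.
Proof.
move=> m0 x0 logder; have lm := lam_gt0 m0; have lx := lam_gt0 x0.
rewrite /S_kernel.
set a := m * derive1 g m / g m.
have -> : m * derive1 lam m / lam m = a by rewrite /a -!mulrA logder.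
rewrite (_ : g m / lam m * _ = g m * (x / m) `^ a / lam x);
  last by field; rewrite !gt_eqF.
apply: ler_wpM2r; first by rewrite invr_ge0 ltW.
by apply: logconvex_powR_le => //; [exact: g_gt0|exact: g_gt0|exact: dg].
Qed.

Lemma S_fun_le_integral_tail (m : R) : 0 < m ->
  is_derive m 1 (fun x => g x / lam x) 0 ->
  ((g m / lam m)%:E * S_fun m lam <=
     \int[mu]_(x in `[m, +oo[) (g x / lam x)%:E)%E.
Proof.
move=> m0 dm0.
have logder := derive_div_eq0_logderive (lt0r_neq0 (g_gt0 m0))
  (lt0r_neq0 (lam_gt0 m0)) (dg m0) (dlam m0) dm0.
have pos x : m <= x -> 0 < x by exact: lt_le_trans.
have sub : `[m, +oo[ `<=` (`]0, +oo[ : set R).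
  by move=> x; rewrite /= !in_itv /= !andbT => /pos.
have k0 x : m <= x -> 0 <= S_kernel lam m x.
  by move=> /pos x0; rewrite mulr_ge0 ?powR_ge0 // divr_ge0 // ltW ?lam_gt0.
have mk : measurable_fun `[m, +oo[ (EFin \o S_kernel lam m).
  apply: (measurable_funS (measurable_itv _) sub).
  apply: derivable_measurable_itvoy => x x0.
  by apply: derivable_S_kernel => //; [rewrite gt_eqF ?lam_gt0|exact: dlam].
rewrite S_funE -ge0_integralZl //; last 2 first.
- by move=> x; rewrite /= in_itv /= andbT lee_fin => /k0.
- by rewrite lee_fin div_ge0.
apply: ge0_le_integral => //.
- move=> x; rewrite /= in_itv /= andbT => /k0 xk.
  by rewrite -EFinM lee_fin mulr_ge0 // div_ge0.
- exact: measurable_funeM.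
- exact: measurable_funS measurable_div.
move=> x; rewrite /= in_itv /= andbT => mx.
by rewrite -EFinM lee_fin div_mul_S_kernel_le // pos.
Qed.

Hypothesis S_liminf : (0 < limf_einf (fun x => S_fun x lam) +oo%R)%E.
Hypothesis div_integrable :
  (\int[mu]_(x in `]0%R, +oo[) (g x / lam x)%:E < +oo)%E.

Lemma div_eventually_lt (e : R) : 0 < e -> \forall x \near +oo, g x / lam x < e.
Proof.
move=> e0; have [c c0 S_ge] := limf_einf_gt0_lb S_liminf.
have [K [_ hK]] : \forall x \near +oo,
    [/\ 0 < x, (c%:E <= S_fun x lam)%E &
       (\int[mu]_(y in `[x, +oo[) (g y / lam y)%:E < (e * c)%:E)%E].
  near=> x; split; near: x; first exact: nbhs_pinfty_gt.
  - exact: S_ge.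
  - exact: finite_integral_tail_lt (mulr_gt0 e0 c0).
have [p Kp gp] := finite_integral_frequently_lt div_ge0 measurable_div div_integrable K e0.
exists p; split => [|x px]; first exact: num_real.
rewrite ltNge; apply/negP => gx.
have [q xq gq] := finite_integral_frequently_lt div_ge0 measurable_div div_integrable x e0.
have [|m [pm gm dm0]] :=
  interior_max_derive_eq0 (f := fun x => g x / lam x) px xq gp gq gx.
  move=> t; rewrite in_itv /= => /andP[pt _]; apply: derivable_div.
  by have [] := hK _ (lt_le_trans Kp pt).
have [m0 Sm tailm] := hK _ (lt_trans Kp pm).
have : ((e * c)%:E <= (g m / lam m)%:E * S_fun m lam)%E.
  apply: le_trans (lee_wpmul2l _ Sm); last by rewrite lee_fin div_ge0.
  by rewrite -EFinM lee_fin ler_wpM2r // ltW.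
move=> /le_trans/(_ (S_fun_le_integral_tail m0 dm0))/le_lt_trans/(_ tailm).
by rewrite ltxx.
Unshelve. all: by end_near.
Qed.

Lemma div_cvg0 : (fun x => g x / lam x) @ +oo --> 0.
Proof.
apply/cvgrPdist_lt => e e0; near=> x.
have x0 : 0 < x by near: x; exact: nbhs_pinfty_gt.
rewrite sub0r normrN ger0_norm ?div_ge0 //.
by near: x; exact: div_eventually_lt.
Unshelve. all: by end_near.
Qed.

End LogConvexQuotient.

Theorem theorem4p2 (R : realType) (lam g : R -> R) :
  (* lambda positive and increasing on [0, oo) *)
  (forall x, 0 <= x -> 0 < lam x) ->
  (forall x y, 0 <= x -> x <= y -> lam x <= lam y) ->
  (* lambda smooth: derivatives of all orders exist on (0, oo) *)
  (forall n x, 0 < x -> derivable (iter_deriv n lam) x 1) ->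
  (* liminf_{x -> oo} S(x, lambda) > 0 *)
  (0 < limf_einf (fun x => S_fun x lam) +oo%R)%E ->
  (* g positive and differentiable on (0, oo) *)
  (forall x, 0 < x -> 0 < g x) ->
  (forall x, 0 < x -> derivable g x 1) ->
  (* X |-> log g(e^X) is convex on R *)
  convex_function (setT : set R) (fun X => ln (g (expR X))) ->
  (* \int_0^oo g / lambda < oo *)
  (\int[@lebesgue_measure R]_(x in `]0%R, +oo[) (g x / lam x)%:E < +oo)%E ->
  (fun x => g x / lam x) @ +oo --> 0.
Proof.
move=> lam_ge0 _ lam_smooth S_liminf g_gt0 dg g_logcvx div_integrable.
apply: div_cvg0 g_gt0 dg g_logcvx S_liminf div_integrable.
- by move=> x /ltW; exact: lam_ge0.
- exact: lam_smooth 0%N.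
Qed.
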